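(* Fix a range-restricted CHR program $\mathcal{P}$. Let $\langle \mathbb{G};\emptyset;\mathbb{B};\mathbb{V}\rangle$ and $\langle \mathbb{L};\mathbb{P};\mathbb{B}';\mathbb{V}\rangle$ be $\omega_!$ states. If $\langle \mathbb{G};\emptyset;\mathbb{B};\mathbb{V}\rangle \rightarrowtail_!^* \langle \mathbb{L};\mathbb{P};\mathbb{B}';\mathbb{V}\rangle$ (in $\mathcal{P}$), then for every $N\in\mathbb{N}$ there exists an $\omega_e$ state $\langle \mathbb{G}';\mathbb{B}';\mathbb{V}\rangle$ such that $\langle \mathbb{G};\mathbb{B};\mathbb{V}\rangle \rightarrowtail_e^* \langle \mathbb{G}';\mathbb{B}';\mathbb{V}\rangle$ (in $\mathcal{P}$) and $\mathbb{L}\uplus N\cdot\mathbb{P}\subseteq \mathbb{G}'$ (multiset inclusion, where $N\cdot\mathbb{P}$ is the multiset $\mathbb{P}$ with all multiplicities multiplied by $N$).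
   Context: Constraint Handling Rules (CHR). There are user-defined (CHR) constraints and built-in constraints; built-ins are interpreted by a satisfaction-complete, decidable constraint theory $\mathcal{CT}$. A rule has the form $r\ @\ H_1\setminus H_2 \Leftrightarrow G\mid B_c,B_b$ where $H_1$ (kept head) and $H_2$ (removed head) are multisets of CHR constraints, the guard $G$ is a conjunction of built-ins, $B_c$ is a multiset of CHR constraints and $B_b$ a conjunction of built-ins. If $H_2=\emptyset$ it is a propagation rule. A variant of a rule is obtained by renaming its variables to pairwise distinct variables. The local variables of a rule are $\mathrm{vars}(G,B_c,B_b)\setminus\mathrm{vars}(H_1,H_2)$; a rule is range-restricted if it has no local variables; a program is a set of rules, range-restricted if all its rules are. $\omega_e$: a state is $\langle \mathbb{G};\mathbb{B};\mathbb{V}\rangle$ with $\mathbb{G}$ a multiset of CHR constraints, $\mathbb{B}$ a conjunction of built-ins, $\mathbb{V}$ a set of (global) variables. A variable of $\mathbb{B}$ not in $\mathbb{V}$ or $\mathbb{G}$ is strictly local. State equivalence $\equiv_e$ is the smallest equivalence relation with: (1) $\langle \mathbb{G};X\doteq t\wedge\mathbb{B};\mathbb{V}\rangle\equiv_e\langle \mathbb{G}[X/t];X\doteq t\wedge\mathbb{B};\mathbb{V}\rangle$; (2) if $\mathcal{CT}\models \exists\bar s.\mathbb{B}\leftrightarrow\exists\bar s'.\mathbb{B}'$ with $\bar s,\bar s'$ the strictly local variables of $\mathbb{B},\mathbb{B}'$, then $\langle \mathbb{G};\mathbb{B};\mathbb{V}\rangle\equiv_e\langle \mathbb{G};\mathbb{B}';\mathbb{V}\rangle$;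 (3) if $X$ occurs in neither $\mathbb{G}$ nor $\mathbb{B}$, $\langle \mathbb{G};\mathbb{B};\{X\}\cup\mathbb{V}\rangle\equiv_e\langle \mathbb{G};\mathbb{B};\mathbb{V}\rangle$; (4) $\langle \mathbb{G};\bot;\mathbb{V}\rangle\equiv_e\langle \mathbb{G}';\bot;\mathbb{V}\rangle$. Transitions are on equivalence classes: for a variant of a rule $r\ @\ H_1\setminus H_2\Leftrightarrow G\mid B_c,B_b$ of $\mathcal{P}$ whose local variables are disjoint from the variables of the pre-state, $[\langle H_1\uplus H_2\uplus\mathbb{G};G\wedge\mathbb{B};\mathbb{V}\rangle]\rightarrowtail_e[\langle H_1\uplus B_c\uplus\mathbb{G};G\wedge B_b\wedge\mathbb{B};\mathbb{V}\rangle]$. $\rightarrowtail_e^*$ is the reflexive-transitive closure; states are identified with their classes. $\omega_!$ (defined only for range-restricted programs): a state is $\langle \mathbb{L};\mathbb{P};\mathbb{B};\mathbb{V}\rangle$ with $\mathbb{L}$ (linear store) and $\mathbb{P}$ (persistent store) multisets of CHR constraints, $\mathbb{B}$ a conjunction of built-ins, $\mathbb{V}$ a set of global variables; a variable not in $\mathbb{V}\cup\mathbb{L}\cup\mathbb{P}$ is strictly local. Equivalence $\equiv_!$ is the smallest equivalence relation with: (1) $\langle \mathbb{L};\mathbb{P};X\doteq t\wedge\mathbb{B};\mathbb{V}\rangle\equiv_!\langle \mathbb{L}[X/t];\mathbb{P}[X/t];X\doteq t\wedge\mathbb{B};\mathbb{V}\rangle$; (2) if $\mathcal{CT}\models\exists\bar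 s.\mathbb{B}\leftrightarrow\exists\bar s'.\mathbb{B}'$ ($\bar s,\bar s'$ strictly local variables), $\langle \mathbb{L};\mathbb{P};\mathbb{B};\mathbb{V}\rangle\equiv_!\langle \mathbb{L};\mathbb{P};\mathbb{B}';\mathbb{V}\rangle$; (3) if $X$ does not occur in $\mathbb{L},\mathbb{P},\mathbb{B}$, $\langle \mathbb{L};\mathbb{P};\mathbb{B};\{X\}\cup\mathbb{V}\rangle\equiv_!\langle \mathbb{L};\mathbb{P};\mathbb{B};\mathbb{V}\rangle$; (4) $\langle \mathbb{L};\mathbb{P};\bot;\mathbb{V}\rangle\equiv_!\langle \mathbb{L}';\mathbb{P}';\bot;\mathbb{V}'\rangle$; (5) $\langle \mathbb{L};P\uplus P\uplus\mathbb{P};\mathbb{B};\mathbb{V}\rangle\equiv_!\langle \mathbb{L};P\uplus\mathbb{P};\mathbb{B};\mathbb{V}\rangle$. Transitions $\rightarrowtail_!$ on equivalence classes, for a (variant of a) rule of $\mathcal{P}$: ApplyLinear: for a rule $r\ @\ (H_1^l\uplus H_1^p)\setminus(H_2^l\uplus H_2^p)\Leftrightarrow G\mid B_c,B_b$ with $H_2^l\neq\emptyset$, $\sigma=[\langle H_1^l\uplus H_2^l\uplus\mathbb{L};H_1^p\uplus H_2^p\uplus\mathbb{P};G\wedge\mathbb{B};\mathbb{V}\rangle]\rightarrowtail_!\tau=[\langle H_1^l\uplus B_c\uplus\mathbb{L};H_1^p\uplus H_2^p\uplus\mathbb{P};G\wedge\mathbb{B}\wedge B_b;\mathbb{V}\rangle]$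 provided $\sigma\neq\tau$. ApplyPersistent: for a rule $r\ @\ (H_1^l\uplus H_1^p)\setminus H_2^p\Leftrightarrow G\mid B_c,B_b$, $\sigma=[\langle H_1^l\uplus\mathbb{L};H_1^p\uplus H_2^p\uplus\mathbb{P};G\wedge\mathbb{B};\mathbb{V}\rangle]\rightarrowtail_!\tau=[\langle H_1^l\uplus\mathbb{L};H_1^p\uplus H_2^p\uplus B_c\uplus\mathbb{P};G\wedge\mathbb{B}\wedge B_b;\mathbb{V}\rangle]$ provided $\sigma\neq\tau$. $\rightarrowtail_!^*$ is the reflexive-transitive closure. *)

From Stdlib Require Import List Permutation Arith Relations.
Import ListNotations.
Open Scope bool_scope.
Set Implicit Arguments.

Inductive term (F : Type) : Type :=
| TVar (x : nat)
| TApp (f : F) (args : list (term F)).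
Arguments TVar {F} x.
Arguments TApp {F} f args.

Fixpoint occ_t {F : Type} (x : nat) (t : term F) : bool :=
  match t with
  | TVar y => Nat.eqb x y
  | TApp _ ts => existsb (occ_t x) ts
  end.

Fixpoint subst_t {F : Type} (X : nat) (s : term F) (t : term F) : term F :=
  match t with
  | TVar y => if Nat.eqb y X then s else TVar y
  | TApp f ts => TApp f (map (subst_t X s) ts)
  end.

Fixpoint rename_t {F : Type} (rho : nat -> nat) (t : term F) : term F :=
  match t with
  | TVar y => TVar (rho y)
  | TApp f ts => TApp f (map (rename_t rho) ts)
  end.

(* Built-in constraints (atoms): equality, true, false, other built-in
   predicates Pb. A conjunction of built-ins is a list of atoms. *)
Inductive batom (F Pb : Type) : Type :=
| BEq (t1 t2 : term F)
| BTrue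
| BFalse
| BPred (p : Pb) (args : list (term F)).
Arguments BEq {F Pb} t1 t2.
Arguments BTrue {F Pb}.
Arguments BFalse {F Pb}.
Arguments BPred {F Pb} p args.

Inductive chr (F Pc : Type) : Type :=
| CC (c : Pc) (args : list (term F)).
Arguments CC {F Pc} c args.

Definition occ_b {F Pb : Type} (x : nat) (a : batom F Pb) : bool :=
  match a with
  | BEq t1 t2 => occ_t x t1 || occ_t x t2
  | BTrue | BFalse => false
  | BPred _ ts => existsb (occ_t x) ts
  end.

Definition rename_b {F Pb : Type} (rho : nat -> nat) (a : batom F Pb) : batom F Pb :=
  match a with
  | BEq t1 t2 => BEq (rename_t rho t1) (rename_t rho t2)
  | BTrue => BTrue
  | BFalse => BFalse
  | BPred p ts => BPred p (map (rename_t rho) ts)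
  end.

Definition occ_c {F Pc : Type} (x : nat) (c : chr F Pc) : bool :=
  match c with CC _ ts => existsb (occ_t x) ts end.

Definition subst_c {F Pc : Type} (X : nat) (s : term F) (c : chr F Pc) : chr F Pc :=
  match c with CC p ts => CC p (map (subst_t X s) ts) end.

Definition rename_c {F Pc : Type} (rho : nat -> nat) (c : chr F Pc) : chr F Pc :=
  match c with CC p ts => CC p (map (rename_t rho) ts) end.

Definition occ_bs {F Pb : Type} (x : nat) (B : list (batom F Pb)) : bool :=
  existsb (occ_b x) B.
Definition occ_cs {F Pc : Type} (x : nat) (G : list (chr F Pc)) : bool :=
  existsb (occ_c x) G.

Record model (F Pb : Type) : Type := Model {
  dom : Type;
  dom_pt : dom;                              (* domains are nonempty *)
  fI : F -> list dom -> dom;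
  pI : Pb -> list dom -> Prop
}.

Fixpoint eval_t {F Pb : Type} (M : model F Pb) (v : nat -> dom M) (t : term F)
  : dom M :=
  match t with
  | TVar x => v x
  | TApp f ts => fI M f (map (eval_t M v) ts)
  end.

Definition sat_b {F Pb : Type} (M : model F Pb) (v : nat -> dom M) (a : batom F Pb)
  : Prop :=
  match a with
  | BEq t1 t2 => eval_t M v t1 = eval_t M v t2
  | BTrue => True
  | BFalse => False
  | BPred p ts => pI M p (map (eval_t M v) ts)
  end.

Definition sat_bs {F Pb : Type} (M : model F Pb) (v : nat -> dom M)
  (B : list (batom F Pb)) : Prop :=
  forall a, In a B -> sat_b M v a.

Inductive formula (F Pb : Type) : Type :=
| FAtom (a : batom F Pb)
| FNot (phi : formula F Pb)
| FAnd (phi psi : formula F Pb)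
| FEx (x : nat) (phi : formula F Pb).
Arguments FAtom {F Pb} a.
Arguments FNot {F Pb} phi.
Arguments FAnd {F Pb} phi psi.
Arguments FEx {F Pb} x phi.

Definition upd {D : Type} (v : nat -> D) (x : nat) (d : D) : nat -> D :=
  fun y => if Nat.eqb y x then d else v y.

Fixpoint sat_f {F Pb : Type} (M : model F Pb) (v : nat -> dom M) (phi : formula F Pb)
  : Prop :=
  match phi with
  | FAtom a => sat_b M v a
  | FNot p => ~ sat_f M v p
  | FAnd p q => sat_f M v p /\ sat_f M v q
  | FEx x p => exists d, sat_f M (upd v x d) p
  end.

(* A theory is a set of formulas (read as universally closed). *)
Definition theory (F Pb : Type) := formula F Pb -> Prop.

Definition is_model {F Pb : Type} (CT : theory F Pb) (M : model F Pb) : Prop :=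
  forall phi, CT phi -> forall v, sat_f M v phi.

(* CT |= Phi, Phi a (semantically given) formula with free variables,
   read as universally closed *)
Definition entails {F Pb : Type} (CT : theory F Pb)
  (Phi : forall M : model F Pb, (nat -> dom M) -> Prop) : Prop :=
  forall M, is_model CT M -> forall v, Phi M v.

(* satisfaction-completeness: for every conjunction B of built-ins,
   CT |= exists B  or  CT |= ~ exists B  (exists-closure over all variables) *)
Definition sat_complete {F Pb : Type} (CT : theory F Pb) : Prop :=
  forall B : list (batom F Pb),
    entails CT (fun M _ => exists w, sat_bs M w B) \/
    entails CT (fun M _ => ~ exists w, sat_bs M w B).

(* [exists s. B] at valuation v, where s is the set of variables [loc] *)
Definition ex_loc {F Pb : Type} (M : model F Pb) (v : nat -> dom M)
  (B : list (batom F Pb)) (loc : nat -> Prop) : Prop :=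
  exists w, (forall x, ~ loc x -> w x = v x) /\ sat_bs M w B.

Record rule (F Pb Pc : Type) : Type := Rule {
  kept : list (chr F Pc);
  removed : list (chr F Pc);
  guard : list (batom F Pb);
  bodyc : list (chr F Pc);
  bodyb : list (batom F Pb)
}.

Definition rename_rule {F Pb Pc : Type} (rho : nat -> nat) (r : rule F Pb Pc)
  : rule F Pb Pc :=
  Rule (map (rename_c rho) (kept r)) (map (rename_c rho) (removed r))
       (map (rename_b rho) (guard r)) (map (rename_c rho) (bodyc r))
       (map (rename_b rho) (bodyb r)).

Definition program (F Pb Pc : Type) := list (rule F Pb Pc).

Definition variant {F Pb Pc : Type} (P : program F Pb Pc) (r' : rule F Pb Pc) : Prop :=
  exists r rho, In r P /\ (forall x y, rho x = rho y -> x = y) /\ r' = rename_rule rho r.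

Definition local_var {F Pb Pc : Type} (r : rule F Pb Pc) (x : nat) : Prop :=
  (occ_bs x (guard r) || occ_cs x (bodyc r) || occ_bs x (bodyb r)) = true /\
  (occ_cs x (kept r) || occ_cs x (removed r)) = false.

Definition range_restricted {F Pb Pc : Type} (P : program F Pb Pc) : Prop :=
  forall r, In r P -> forall x, ~ local_var r x.

Definition bot {F Pb : Type} : list (batom F Pb) := [BFalse].

Record estate (F Pb Pc : Type) : Type := ES {
  eG : list (chr F Pc);          (* multiset, up to permutation *)
  eB : list (batom F Pb);        (* conjunction *)
  eV : nat -> Prop               (* set of global variables *)
}.
Arguments ES {F Pb Pc} eG eB eV.

Definition sloc_e {F Pb Pc : Type} (G : list (chr F Pc)) (B : list (batom F Pb))
  (V : nat -> Prop) (x : nat) : Prop :=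
  occ_bs x B = true /\ ~ V x /\ occ_cs x G = false.

Inductive eqv_e {F Pb Pc : Type} (CT : theory F Pb) :
  estate F Pb Pc -> estate F Pb Pc -> Prop :=
| eqe_refl s : eqv_e CT s s
| eqe_sym s t : eqv_e CT s t -> eqv_e CT t s
| eqe_trans s t u : eqv_e CT s t -> eqv_e CT t u -> eqv_e CT s u
(* multisets: list representations up to permutation *)
| eqe_perm G G' B V : Permutation G G' -> eqv_e CT (ES G B V) (ES G' B V)
| eqe_subst G X t B V :
    eqv_e CT (ES G (BEq (TVar X) t :: B) V)
             (ES (map (subst_c X t) G) (BEq (TVar X) t :: B) V)
| eqe_ct G B B' V :
    entails CT (fun M v => ex_loc M v B (sloc_e G B V) <->
                           ex_loc M v B' (sloc_e G B' V)) ->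
    eqv_e CT (ES G B V) (ES G B' V)
| eqe_var G B V V' X :
    occ_cs X G = false -> occ_bs X B = false ->
    (forall y, V' y <-> (y = X \/ V y)) ->
    eqv_e CT (ES G B V') (ES G B V)
| eqe_bot G G' V : eqv_e CT (ES G bot V) (ES G' bot V).

Inductive raw_e {F Pb Pc : Type} (P : program F Pb Pc) :
  estate F Pb Pc -> estate F Pb Pc -> Prop :=
| raw_e_apply r G B V :
    variant P r ->
    (forall x, local_var r x ->
       occ_cs x G = false /\ occ_bs x B = false /\ ~ V x /\
       occ_cs x (kept r) = false /\ occ_cs x (removed r) = false /\
       occ_bs x (guard r) = false) ->
    raw_e P (ES (kept r ++ removed r ++ G) (guard r ++ B) V)
            (ES (kept r ++ bodyc r ++ G) (guard r ++ bodyb r ++ B) V).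

(* transitions on equivalence classes *)
Definition step_e {F Pb Pc : Type} (CT : theory F Pb) (P : program F Pb Pc)
  (s t : estate F Pb Pc) : Prop :=
  exists s0 t0, eqv_e CT s s0 /\ raw_e P s0 t0 /\ eqv_e CT t0 t.

Definition star_e {F Pb Pc : Type} (CT : theory F Pb) (P : program F Pb Pc) :
  estate F Pb Pc -> estate F Pb Pc -> Prop :=
  clos_refl_trans _ (fun s t => step_e CT P s t \/ eqv_e CT s t).

Record bstate (F Pb Pc : Type) : Type := BS {
  bL : list (chr F Pc);          (* linear store (multiset) *)
  bP : list (chr F Pc);          (* persistent store (multiset) *)
  bB : list (batom F Pb);
  bV : nat -> Prop
}.
Arguments BS {F Pb Pc} bL bP bB bV.

Definition sloc_b {F Pb Pc : Type} (L P : list (chr F Pc)) (B : list (batom F Pb))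
  (V : nat -> Prop) (x : nat) : Prop :=
  occ_bs x B = true /\ ~ V x /\ occ_cs x L = false /\ occ_cs x P = false.

Inductive eqv_b {F Pb Pc : Type} (CT : theory F Pb) :
  bstate F Pb Pc -> bstate F Pb Pc -> Prop :=
| eqb_refl s : eqv_b CT s s
| eqb_sym s t : eqv_b CT s t -> eqv_b CT t s
| eqb_trans s t u : eqv_b CT s t -> eqv_b CT t u -> eqv_b CT s u
| eqb_perm L L' P P' B V :
    Permutation L L' -> Permutation P P' -> eqv_b CT (BS L P B V) (BS L' P' B V)
| eqb_subst L P X t B V :
    eqv_b CT (BS L P (BEq (TVar X) t :: B) V)
             (BS (map (subst_c X t) L) (map (subst_c X t) P) (BEq (TVar X) t :: B) V)
| eqb_ct L P B B' V :
    entails CT (fun M v => ex_loc M v B (sloc_b L P B V) <->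
                           ex_loc M v B' (sloc_b L P B' V)) ->
    eqv_b CT (BS L P B V) (BS L P B' V)
| eqb_var L P B V V' X :
    occ_cs X L = false -> occ_cs X P = false -> occ_bs X B = false ->
    (forall y, V' y <-> (y = X \/ V y)) ->
    eqv_b CT (BS L P B V') (BS L P B V)
| eqb_bot L P L' P' V V' : eqv_b CT (BS L P bot V) (BS L' P' bot V')
| eqb_dup L P0 P B V : eqv_b CT (BS L (P0 ++ P0 ++ P) B V) (BS L (P0 ++ P) B V).

Inductive raw_b {F Pb Pc : Type} (P : program F Pb Pc) :
  bstate F Pb Pc -> bstate F Pb Pc -> Prop :=
| raw_b_linear r H1l H1p H2l H2p L Ps B V :
    variant P r ->
    Permutation (kept r) (H1l ++ H1p) ->
    Permutation (removed r) (H2l ++ H2p) ->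
    H2l <> [] ->
    raw_b P (BS (H1l ++ H2l ++ L) (H1p ++ H2p ++ Ps) (guard r ++ B) V)
            (BS (H1l ++ bodyc r ++ L) (H1p ++ H2p ++ Ps) (guard r ++ B ++ bodyb r) V)
| raw_b_persistent r H1l H1p L Ps B V :
    variant P r ->
    Permutation (kept r) (H1l ++ H1p) ->
    raw_b P (BS (H1l ++ L) (H1p ++ removed r ++ Ps) (guard r ++ B) V)
            (BS (H1l ++ L) (H1p ++ removed r ++ bodyc r ++ Ps)
                (guard r ++ B ++ bodyb r) V).

(* transitions on classes, with the side condition sigma <> tau *)
Definition step_b {F Pb Pc : Type} (CT : theory F Pb) (P : program F Pb Pc)
  (s t : bstate F Pb Pc) : Prop :=
  exists s0 t0, eqv_b CT s s0 /\ raw_b P s0 t0 /\ eqv_b CT t0 t /\ ~ eqv_b CT s0 t0.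

Definition star_b {F Pb Pc : Type} (CT : theory F Pb) (P : program F Pb Pc) :
  bstate F Pb Pc -> bstate F Pb Pc -> Prop :=
  clos_refl_trans _ (fun s t => step_b CT P s t \/ eqv_b CT s t).

Definition msub {A : Type} (X Y : list A) : Prop :=
  exists R, Permutation (X ++ R) Y.

Definition mscale {A : Type} (N : nat) (X : list A) : list A :=
  concat (repeat X N).

From Stdlib Require Import List Permutation Arith Relations Bool.
Import ListNotations.

(* An ω_! state ⟨L; P; B; V⟩ is simulated from an ω_e state σ0 when, for every
   N, σ0 reaches ⟨L ⊎ (N+1)·P ⊎ Z; B; V⟩ for some Z made of elements of P.
   Since Z ⊆ P, the ω_e store has the variables of L and P, so every ω_!
   equivalence except (4) transfers to ω_e, and (5) is absorbed by the
   unbounded multiplicities.  ApplyLinear consumes one copy of the persistent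
   head; ApplyPersistent fires the rule once on each of N+1 copies of its
   removed head, which is why 2(N+1) copies are requested beforehand.
   Range-restrictedness makes every variant of a rule applicable in ω_e.
   Equivalence (4) may change V, but it starts from an unsatisfiable store:
   once ω_e reaches one, it reaches every unsatisfiable store with the
   original global variables, so the invariant is "simulated, or the store is
   unsatisfiable and σ0 reaches an unsatisfiable store". *)

(* Decides [Permutation] between two concatenations of the same blocks, by
   rotating the right-hand side until its head block matches the left one. *)
Ltac perm_solve_fuel n :=
  match n with
  | O => fail 1 "perm_solve: out of fuel"
  | S ?m =>
    repeat rewrite <- app_assoc;
    first
    [ apply Permutation_refl
    | lazymatch goal with
      | |- Permutation (?x ++ _) (?x ++ _) =>
          apply Permutation_app_head; perm_solve_fuel m
      | |- Permutation _ (?y ++ ?r) =>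
          apply (@Permutation_trans _ _ (r ++ y));
          [ perm_solve_fuel m | apply Permutation_app_comm ]
      end ]
  end.
Ltac perm_solve := perm_solve_fuel 60%nat.

Section Multisets.
Context {A : Type}.

Lemma mscale_S n (X : list A) : mscale (S n) X = X ++ mscale n X.
Proof. reflexivity. Qed.

Lemma mscale_add n m (X : list A) : mscale (n + m) X = mscale n X ++ mscale m X.
Proof. unfold mscale. rewrite repeat_app, concat_app. reflexivity. Qed.

Lemma mscale_nil n : mscale n (@nil A) = [].
Proof. induction n; simpl; auto. Qed.

Lemma mscale_app n (X Y : list A) :
  Permutation (mscale n (X ++ Y)) (mscale n X ++ mscale n Y).
Proof.
  induction n as [|n IH]; [constructor|].
  rewrite !mscale_S, IH. perm_solve.
Qed.

Lemma Permutation_mscale n (X Y : list A) :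
  Permutation X Y -> Permutation (mscale n X) (mscale n Y).
Proof.
  intro HXY. induction n as [|n IH]; [constructor|].
  rewrite !mscale_S. apply Permutation_app; auto.
Qed.

Lemma mscale_map {B : Type} (f : A -> B) n X : mscale n (map f X) = map f (mscale n X).
Proof.
  induction n as [|n IH]; auto.
  change (map f X ++ mscale n (map f X) = map f (X ++ mscale n X)).
  rewrite map_app, IH. reflexivity.
Qed.

Lemma incl_mscale n (X : list A) : incl (mscale n X) X.
Proof.
  induction n as [|n IH]; [intros a []|].
  rewrite mscale_S. apply incl_app; auto using incl_refl.
Qed.

Lemma incl_map_lift {B : Type} (f : A -> B) (P : list A) (Y : list B) :
  incl Y (map f P) -> exists R, map f R = Y /\ incl R P.
Proof.
  induction Y as [|y Y IH]; intro HY.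
  - exists []. split; [reflexivity | intros a []].
  - destruct IH as [R [HR HRP]]; [intros a Ha; apply HY; now right|].
    destruct (proj1 (in_map_iff f P y) (HY y (or_introl eq_refl))) as [x [Hx HxP]].
    exists (x :: R). split; [simpl; congruence | now apply incl_cons].
Qed.

Lemma existsb_incl (f : A -> bool) (X Y : list A) :
  incl X Y -> existsb f X = true -> existsb f Y = true.
Proof.
  intros HXY HX. apply existsb_exists in HX as [a [Ha Hfa]].
  apply existsb_exists. eauto.
Qed.

End Multisets.

Section Renaming.
Context {F Pb Pc : Type} (rho : nat -> nat).

Fixpoint term_nested_ind (Q : term F -> Prop) (Hvar : forall x, Q (TVar x))
  (Happ : forall f ts, Forall Q ts -> Q (TApp f ts)) (t : term F) : Q t :=
  match t with
  | TVar x => Hvar x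
  | TApp f ts =>
      Happ f ts ((fix go (l : list (term F)) : Forall Q l :=
                    match l with
                    | [] => Forall_nil _
                    | u :: l' => Forall_cons _ (term_nested_ind Q Hvar Happ u) (go l')
                    end) ts)
  end.

Lemma existsb_map_rename {T U : Type} (occ : nat -> T -> bool) (occ' : nat -> U -> bool)
  (g : T -> U) (l : list T) :
  (forall x a, In a l ->
     occ' x (g a) = true <-> exists y, x = rho y /\ occ y a = true) ->
  forall x, existsb (occ' x) (map g l) = true <->
            exists y, x = rho y /\ existsb (occ y) l = true.
Proof.
  intros Hg x. rewrite existsb_exists. split.
  - intros [b [Hb Hocc]]. apply in_map_iff in Hb as [a [<- Ha]].
    apply (Hg x a Ha) in Hocc as [y [-> Hy]].
    exists y. split; [reflexivity | apply existsb_exists; eauto].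
  - intros [y [-> Hy]]. apply existsb_exists in Hy as [a [Ha Hocc]].
    exists (g a). split; [now apply in_map | apply (Hg _ a Ha); eauto].
Qed.

Lemma occ_t_rename x (t : term F) :
  occ_t x (rename_t rho t) = true <-> exists y, x = rho y /\ occ_t y t = true.
Proof.
  revert x. induction t as [z|f ts IH] using term_nested_ind; intro x; simpl.
  - rewrite Nat.eqb_eq. split; [intros ->; exists z; auto using Nat.eqb_refl|].
    intros [y [-> Hy]]. apply Nat.eqb_eq in Hy. congruence.
  - apply existsb_map_rename. intros y a Ha. rewrite Forall_forall in IH. auto.
Qed.

Lemma occ_b_rename x (a : batom F Pb) :
  occ_b x (rename_b rho a) = true <-> exists y, x = rho y /\ occ_b y a = true.
Proof.
  destruct a as [t1 t2| | |p ts]; simpl.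
  - rewrite orb_true_iff, !occ_t_rename. split.
    + intros [[y [-> Hy]]|[y [-> Hy]]]; exists y; rewrite Hy; auto using orb_true_r.
    + intros [y [-> Hy]]. apply orb_true_iff in Hy as [Hy|Hy]; eauto.
  - split; [discriminate | intros [y [_ Hy]]; discriminate].
  - split; [discriminate | intros [y [_ Hy]]; discriminate].
  - apply existsb_map_rename. auto using occ_t_rename.
Qed.

Lemma occ_c_rename x (c : chr F Pc) :
  occ_c x (rename_c rho c) = true <-> exists y, x = rho y /\ occ_c y c = true.
Proof. destruct c. apply existsb_map_rename. auto using occ_t_rename. Qed.

Lemma occ_bs_rename x (B : list (batom F Pb)) :
  occ_bs x (map (rename_b rho) B) = true <-> exists y, x = rho y /\ occ_bs y B = true.
Proof. apply existsb_map_rename. auto using occ_b_rename. Qed.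

Lemma occ_cs_rename x (G : list (chr F Pc)) :
  occ_cs x (map (rename_c rho) G) = true <-> exists y, x = rho y /\ occ_cs y G = true.
Proof. apply existsb_map_rename. auto using occ_c_rename. Qed.

End Renaming.

Lemma local_var_rename {F Pb Pc : Type} (rho : nat -> nat) (r : rule F Pb Pc) x :
  local_var (rename_rule rho r) x -> exists y, x = rho y /\ local_var r y.
Proof.
  unfold local_var, rename_rule; simpl.
  rewrite !orb_true_iff, !orb_false_iff, occ_bs_rename, occ_cs_rename, occ_bs_rename.
  intros [Hbody [Hkept Hremoved]].
  assert (Hhead : forall y (C : list (chr F Pc)),
             occ_cs (rho y) (map (rename_c rho) C) = false -> occ_cs y C = false).
  { intros y C Hy. apply not_true_iff_false. intro Hocc.
    rewrite (proj2 (occ_cs_rename rho (rho y) C) (ex_intro _ y (conj eq_refl Hocc))) in Hy.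
    discriminate. }
  destruct Hbody as [[[y [-> Hy]]|[y [-> Hy]]]|[y [-> Hy]]];
    exists y; rewrite !orb_true_iff, !orb_false_iff; auto.
Qed.

Lemma variant_no_local {F Pb Pc : Type} (Prog : program F Pb Pc) :
  range_restricted Prog -> forall r, variant Prog r -> forall x, ~ local_var r x.
Proof.
  intros Hrr r [r0 [rho [Hin [_ ->]]]] x Hx.
  destruct (local_var_rename rho r0 x Hx) as [y [_ Hy]]. exact (Hrr r0 Hin y Hy).
Qed.

Section OmegaE.
Context {F Pb Pc : Type} (CT : theory F Pb) (Prog : program F Pb Pc).

Definition unsat (B : list (batom F Pb)) : Prop :=
  forall M, is_model CT M -> forall w, ~ sat_bs M w B.

Lemma unsat_bot : unsat bot.
Proof. intros M _ w Hw. exact (Hw BFalse (or_introl eq_refl)). Qed.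

Lemma unsat_incl B B' : incl B B' -> unsat B -> unsat B'.
Proof. intros HBB' HB M HM w Hw. apply (HB M HM w). intros a Ha. auto. Qed.

Lemma unsat_ex_loc_equiv B B' (loc loc' : nat -> Prop) :
  entails CT (fun M v => ex_loc M v B loc <-> ex_loc M v B' loc') ->
  unsat B -> unsat B'.
Proof.
  intros Hequiv HB M HM w Hw.
  destruct (proj2 (Hequiv M HM w)) as [w' [_ Hw']]; [now exists w|].
  exact (HB M HM w' Hw').
Qed.

Lemma eqv_e_same_atoms (G : list (chr F Pc)) B B' V :
  (forall a, In a B <-> In a B') -> eqv_e CT (ES G B V) (ES G B' V).
Proof.
  intro Hatoms. apply eqe_ct. intros M _ v.
  assert (Hocc : forall x, occ_bs x B = occ_bs x B').
  { intro x. unfold occ_bs. apply eq_true_iff_eq.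
    split; apply existsb_incl; intros a; apply Hatoms. }
  unfold ex_loc, sloc_e, sat_bs.
  split; intros [w [Hw HB]]; exists w; split.
  - intros x Hx. apply Hw. rewrite Hocc. exact Hx.
  - intros a Ha. apply HB, Hatoms, Ha.
  - intros x Hx. apply Hw. rewrite <- Hocc. exact Hx.
  - intros a Ha. apply HB, Hatoms, Ha.
Qed.

Lemma eqv_e_unsat_bot (G : list (chr F Pc)) B V :
  unsat B -> eqv_e CT (ES G B V) (ES G bot V).
Proof.
  intro HB. apply eqe_ct. intros M HM v. unfold ex_loc.
  split; intros [w [_ Hw]]; exfalso; [exact (HB M HM w Hw) | exact (unsat_bot M HM w Hw)].
Qed.

Lemma star_e_eqv s t : eqv_e CT s t -> star_e CT Prog s t.
Proof. intro H. apply rt_step. now right. Qed.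

Lemma star_e_raw s t : raw_e Prog s t -> star_e CT Prog s t.
Proof. intro H. apply rt_step. left. exists s, t. auto using eqe_refl. Qed.

Lemma star_e_perm G G' B V : Permutation G G' -> star_e CT Prog (ES G B V) (ES G' B V).
Proof. intro H. apply star_e_eqv, eqe_perm, H. Qed.

Lemma eqv_e_eV (s t : estate F Pb Pc) :
  eqv_e CT s t -> eqv_e CT (ES (@nil (chr F Pc)) bot (eV s)) (ES [] bot (eV t)).
Proof.
  induction 1; simpl; eauto using eqe_refl, eqe_sym, eqe_trans, eqe_var.
Qed.

Lemma star_e_eV (s t : estate F Pb Pc) :
  star_e CT Prog s t -> eqv_e CT (ES (@nil (chr F Pc)) bot (eV s)) (ES [] bot (eV t)).
Proof.
  induction 1 as [s t [[s0 [t0 [Hs0 [Hraw Ht0]]]]|Heqv]| |];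
    eauto using eqe_refl, eqe_trans, eqv_e_eV.
  apply eqv_e_eV in Hs0, Ht0. destruct Hraw. eauto using eqe_trans.
Qed.

Hypothesis Hrr : range_restricted Prog.

Lemma star_e_fire r W X X' V :
  variant Prog r -> (forall a, In a (bodyb r ++ X) <-> In a X') ->
  star_e CT Prog (ES (kept r ++ removed r ++ W) (guard r ++ X) V)
                 (ES (kept r ++ bodyc r ++ W) (guard r ++ X') V).
Proof.
  intros Hv HX. eapply rt_trans.
  - apply star_e_raw, raw_e_apply; [exact Hv|].
    intros x Hx. exfalso. exact (variant_no_local Prog Hrr r Hv x Hx).
  - apply star_e_eqv, eqv_e_same_atoms. intro a. rewrite !in_app_iff, <- HX, in_app_iff.
    tauto.
Qed.

Lemma star_e_fire_repeat r V : variant Prog r -> forall k W B,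
  star_e CT Prog (ES (kept r ++ mscale (S k) (removed r) ++ W) (guard r ++ B) V)
                 (ES (kept r ++ mscale (S k) (bodyc r) ++ W) (guard r ++ B ++ bodyb r) V).
Proof.
  intros Hv k. induction k as [|k IH]; intros W B.
  - change (mscale 1 ?Y) with (Y ++ []). rewrite !app_nil_r.
    apply star_e_fire; [exact Hv|]. intro a. rewrite !in_app_iff. tauto.
  - eapply rt_trans; [apply star_e_perm|].
    { instantiate (1 := kept r ++ mscale (S k) (removed r) ++ removed r ++ W).
      rewrite (mscale_S (S k)). perm_solve. }
    eapply rt_trans; [apply IH|].
    eapply rt_trans; [apply star_e_perm|].
    { instantiate (1 := kept r ++ removed r ++ mscale (S k) (bodyc r) ++ W). perm_solve. }
    eapply rt_trans; [apply star_e_fire; [exact Hv|]|].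
    { instantiate (1 := B ++ bodyb r). intro a. rewrite !in_app_iff. tauto. }
    rewrite (mscale_S (S k)), <- app_assoc. apply rt_refl.
Qed.

End OmegaE.

Section Simulation.
Context {F Pb Pc : Type} (CT : theory F Pb) (Prog : program F Pb Pc)
  (Hrr : range_restricted Prog) (st0 : estate F Pb Pc).

Definition simulated (s : bstate F Pb Pc) : Prop :=
  forall N, exists Z, incl Z (bP s) /\
    star_e CT Prog st0 (ES (bL s ++ mscale (S N) (bP s) ++ Z) (bB s) (bV s)).

Definition reaches_unsat : Prop :=
  exists t, star_e CT Prog st0 t /\ unsat CT (eB t).

Definition sim_inv (s : bstate F Pb Pc) : Prop :=
  simulated s \/ (unsat CT (bB s) /\ reaches_unsat).

Lemma reaches_unsat_star_e G B :
  reaches_unsat -> unsat CT B -> star_e CT Prog st0 (ES G B (eV st0)).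
Proof.
  intros [[Gt Bt Vt] [Ht Hunsat]] HB.
  eapply rt_trans; [exact Ht|]. apply star_e_eqv.
  apply (star_e_eV CT Prog) in Ht. simpl in *.
  eapply eqe_trans; [apply eqv_e_unsat_bot, Hunsat|].
  eapply eqe_trans; [apply (eqe_bot _ _ [])|].
  eapply eqe_trans; [apply eqe_sym, Ht|].
  eapply eqe_trans; [apply (eqe_bot _ _ G)|].
  apply eqe_sym, eqv_e_unsat_bot, HB.
Qed.

Lemma occ_cs_simulated x (L P Z : list (chr F Pc)) N :
  incl Z P -> occ_cs x (L ++ mscale (S N) P ++ Z) = occ_cs x L || occ_cs x P.
Proof.
  intro HZ. unfold occ_cs. rewrite mscale_S, !existsb_app.
  destruct (existsb (occ_c x) P) eqn:HP; simpl; [now rewrite !orb_true_r|].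
  assert (Hsub : forall Y, incl Y P -> existsb (occ_c x) Y = false).
  { intros Y HY. apply not_true_iff_false. intro HYx.
    rewrite (existsb_incl _ _ _ HY HYx) in HP. discriminate. }
  rewrite (Hsub _ (incl_mscale N P)), (Hsub _ HZ). now rewrite !orb_false_r.
Qed.

Lemma simulated_perm L L' P P' B V :
  Permutation L L' -> Permutation P P' ->
  simulated (BS L P B V) <-> simulated (BS L' P' B V).
Proof.
  assert (Hdir : forall L L' P P', Permutation L L' -> Permutation P P' ->
            simulated (BS L P B V) -> simulated (BS L' P' B V)).
  { intros L0 L0' P0 P0' HL HP Hsim N. destruct (Hsim N) as [Z [HZ Hs]]; simpl in *.
    exists Z. split; [intros a Ha; eapply Permutation_in; eauto|].
    eapply rt_trans; [exact Hs|]. apply star_e_perm.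
    apply Permutation_app; [exact HL|]. apply Permutation_app_tail, Permutation_mscale, HP. }
  intros HL HP. split; apply Hdir; auto using Permutation_sym.
Qed.

Lemma simulated_subst L P X t B V :
  simulated (BS L P (BEq (TVar X) t :: B) V) <->
  simulated (BS (map (subst_c X t) L) (map (subst_c X t) P) (BEq (TVar X) t :: B) V).
Proof.
  split; intros Hsim N; destruct (Hsim N) as [Z [HZ Hs]]; simpl in *.
  - exists (map (subst_c X t) Z). split; [now apply incl_map|].
    eapply rt_trans; [exact Hs|].
    rewrite mscale_map, <- !map_app. apply star_e_eqv, eqe_subst.
  - destruct (incl_map_lift (subst_c X t) P Z HZ) as [Z0 [<- HZ0]].
    exists Z0. split; [exact HZ0|].
    eapply rt_trans; [exact Hs|].
    rewrite mscale_map, <- !map_app. apply star_e_eqv, eqe_sym, eqe_subst.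
Qed.

Lemma simulated_ct L P B B' V :
  entails CT (fun M v => ex_loc M v B (sloc_b L P B V) <->
                         ex_loc M v B' (sloc_b L P B' V)) ->
  simulated (BS L P B V) <-> simulated (BS L P B' V).
Proof.
  assert (Hdir : forall B B', entails CT (fun M v => ex_loc M v B (sloc_b L P B V) <->
                                                    ex_loc M v B' (sloc_b L P B' V)) ->
            simulated (BS L P B V) -> simulated (BS L P B' V)).
  { intros B0 B0' Hequiv Hsim N. destruct (Hsim N) as [Z [HZ Hs]]; simpl in *.
    exists Z. split; [exact HZ|]. eapply rt_trans; [exact Hs|].
    apply star_e_eqv, eqe_ct. intros M HM v.
    assert (Hloc : forall (C : list (batom F Pb)) x, sloc_e (L ++ mscale (S N) P ++ Z) C V x <-> sloc_b L P C V x).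
    { intros C x. unfold sloc_e, sloc_b. rewrite occ_cs_simulated, orb_false_iff by exact HZ.
      tauto. }
    unfold ex_loc in *. setoid_rewrite Hloc. apply Hequiv, HM. }
  intro Hequiv. split; apply Hdir; [exact Hequiv|].
  intros M HM v. symmetry. apply Hequiv, HM.
Qed.

Lemma simulated_var L P B V V' X :
  occ_cs X L = false -> occ_cs X P = false -> occ_bs X B = false ->
  (forall y, V' y <-> (y = X \/ V y)) ->
  simulated (BS L P B V') <-> simulated (BS L P B V).
Proof.
  intros HL HP HB HV.
  split; intros Hsim N; destruct (Hsim N) as [Z [HZ Hs]]; simpl in *;
    exists Z; split; auto; eapply rt_trans; try exact Hs; apply star_e_eqv.
  all: assert (HG : occ_cs X (L ++ mscale (S N) P ++ Z) = false)
         by (rewrite occ_cs_simulated, HL, HP by exact HZ; reflexivity).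
  - eapply eqe_var; eauto.
  - eapply eqe_sym, eqe_var; eauto.
Qed.

Lemma simulated_dup L P0 P B V :
  simulated (BS L (P0 ++ P0 ++ P) B V) <-> simulated (BS L (P0 ++ P) B V).
Proof.
  split; intros Hsim N.
  - destruct (Hsim N) as [Z [HZ Hs]]; simpl in *.
    exists (mscale (S N) P0 ++ Z). split.
    + apply incl_app; [apply incl_appl, incl_mscale|].
      intros a Ha. apply HZ in Ha. rewrite !in_app_iff in *. tauto.
    + eapply rt_trans; [exact Hs|]. apply star_e_perm.
      rewrite !mscale_app. perm_solve.
  - destruct (Hsim (N + S N)) as [Z [HZ Hs]]; simpl in *.
    exists (mscale (S N) P ++ Z). split.
    + apply incl_app; [apply incl_appr, incl_appr, incl_mscale|].
      intros a Ha. apply HZ in Ha. rewrite !in_app_iff in *. tauto.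
    + eapply rt_trans; [exact Hs|]. apply star_e_perm.
      change (S (N + S N)) with (S N + S N). rewrite mscale_add, !mscale_app. perm_solve.
Qed.

Lemma simulated_apply_linear r H1l H1p H2l H2p L Ps B V :
  variant Prog r ->
  Permutation (kept r) (H1l ++ H1p) -> Permutation (removed r) (H2l ++ H2p) ->
  simulated (BS (H1l ++ H2l ++ L) (H1p ++ H2p ++ Ps) (guard r ++ B) V) ->
  simulated (BS (H1l ++ bodyc r ++ L) (H1p ++ H2p ++ Ps) (guard r ++ B ++ bodyb r) V).
Proof.
  intros Hv Hkept Hremoved Hsim N.
  destruct (Hsim (S N)) as [Z [HZ Hs]]; simpl in *.
  set (Pf := H1p ++ H2p ++ Ps) in *.
  set (W := L ++ Ps ++ mscale (S N) Pf ++ Z).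
  exists (H1p ++ Ps ++ Z). split.
  { apply incl_app; [apply incl_appl, incl_refl|].
    apply incl_app; [apply incl_appr, incl_appr, incl_refl | exact HZ]. }
  eapply rt_trans; [exact Hs|].
  eapply rt_trans; [apply star_e_perm|].
  { instantiate (1 := kept r ++ removed r ++ W).
    rewrite Hkept, Hremoved, mscale_S. unfold W, Pf. perm_solve. }
  eapply rt_trans; [apply (star_e_fire CT Prog Hrr); [exact Hv|]|].
  { instantiate (1 := B ++ bodyb r). intro a. rewrite !in_app_iff. tauto. }
  apply star_e_perm. rewrite Hkept. unfold W. perm_solve.
Qed.

Lemma simulated_apply_persistent r H1l H1p L Ps B V :
  variant Prog r -> Permutation (kept r) (H1l ++ H1p) ->
  simulated (BS (H1l ++ L) (H1p ++ removed r ++ Ps) (guard r ++ B) V) ->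
  simulated (BS (H1l ++ L) (H1p ++ removed r ++ bodyc r ++ Ps) (guard r ++ B ++ bodyb r) V).
Proof.
  intros Hv Hkept Hsim N.
  destruct (Hsim (N + S N)) as [Z [HZ Hs]]; cbn [bL bP bB bV] in *.
  change (S (N + S N)) with (S N + S N) in Hs.
  set (Pf := H1p ++ removed r ++ Ps) in *.
  set (W := L ++ mscale (S N) Pf ++ mscale N H1p ++ mscale (S N) Ps ++ Z).
  exists (mscale (S N) H1p ++ mscale (S N) Ps ++ Z). split.
  { apply incl_app; [apply incl_appl, incl_mscale|].
    apply incl_app; [apply incl_appr, incl_appr, incl_appr, incl_mscale|].
    intros a Ha. apply HZ in Ha. unfold Pf in Ha. rewrite !in_app_iff in *. tauto. }
  eapply rt_trans; [exact Hs|].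
  eapply rt_trans; [apply star_e_perm|].
  { instantiate (1 := kept r ++ mscale (S N) (removed r) ++ W).
    rewrite Hkept, mscale_add. unfold W, Pf.
    rewrite (mscale_app (S N) H1p (removed r ++ Ps)), (mscale_app (S N) (removed r) Ps).
    rewrite (mscale_S N H1p). perm_solve. }
  eapply rt_trans; [apply (star_e_fire_repeat CT Prog Hrr r V Hv)|].
  apply star_e_perm. rewrite Hkept. unfold W, Pf.
  rewrite (mscale_app (S N) H1p (removed r ++ bodyc r ++ Ps)),
    (mscale_app (S N) (removed r) (bodyc r ++ Ps)), (mscale_app (S N) (bodyc r) Ps),
    (mscale_app (S N) H1p (removed r ++ Ps)), (mscale_app (S N) (removed r) Ps).
  rewrite (mscale_S N H1p). perm_solve.
Qed.

Lemma simulated_raw s t : raw_b Prog s t -> simulated s -> simulated t.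
Proof.
  destruct 1; [apply simulated_apply_linear | apply simulated_apply_persistent]; auto.
Qed.

Lemma unsat_raw s t : raw_b Prog s t -> unsat CT (bB s) -> unsat CT (bB t).
Proof.
  destruct 1; simpl; apply unsat_incl; intro a; rewrite !in_app_iff; tauto.
Qed.

Lemma sim_inv_iff s t :
  (simulated s <-> simulated t) -> (unsat CT (bB s) <-> unsat CT (bB t)) ->
  (sim_inv s <-> sim_inv t).
Proof. unfold sim_inv. tauto. Qed.

Lemma sim_inv_unsat s : unsat CT (bB s) -> (sim_inv s <-> reaches_unsat).
Proof.
  intro Hunsat. unfold sim_inv. split; [|tauto].
  intros [Hsim|[_ Hdead]]; [|exact Hdead].
  destruct (Hsim 0) as [Z [_ Hs]]. eexists; eauto.
Qed.

Lemma sim_inv_eqv s t : eqv_b CT s t -> (sim_inv s <-> sim_inv t).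
Proof.
  induction 1.
  - reflexivity.
  - symmetry. assumption.
  - etransitivity; eassumption.
  - apply sim_inv_iff; [apply simulated_perm; auto | reflexivity].
  - apply sim_inv_iff; [apply simulated_subst | reflexivity].
  - apply sim_inv_iff; [apply simulated_ct; auto|]. simpl.
    split; eapply unsat_ex_loc_equiv; [exact H|].
    intros M HM v. symmetry. apply H, HM.
  - apply sim_inv_iff; [eapply simulated_var; eauto | reflexivity].
  - rewrite !sim_inv_unsat by apply unsat_bot. reflexivity.
  - apply sim_inv_iff; [apply simulated_dup | reflexivity].
Qed.

Lemma sim_inv_star s t : star_b CT Prog s t -> sim_inv s -> sim_inv t.
Proof.
  induction 1 as [s t [[s0 [t0 [Hs0 [Hraw [Ht0 _]]]]]|Heqv]| |]; auto.
  - rewrite (sim_inv_eqv _ _ Hs0), <- (sim_inv_eqv _ _ Ht0).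
    intros [Hsim|[Hunsat Hdead]]; [left | right].
    + exact (simulated_raw _ _ Hraw Hsim).
    + exact (conj (unsat_raw _ _ Hraw Hunsat) Hdead).
  - exact (proj1 (sim_inv_eqv _ _ Heqv)).
Qed.

End Simulation.

Theorem theorem1 (F Pb Pc : Type) (CT : theory F Pb)
  (HCT : sat_complete CT)
  (Prog : program F Pb Pc) (Hrr : range_restricted Prog)
  (G : list (chr F Pc)) (B : list (batom F Pb)) (V : nat -> Prop)
  (L P : list (chr F Pc)) (B' : list (batom F Pb)) :
  star_b CT Prog (BS G [] B V) (BS L P B' V) ->
  forall N : nat,
    exists G' : list (chr F Pc),
      star_e CT Prog (ES G B V) (ES G' B' V) /\ msub (L ++ mscale N P) G'.
Proof.
  intros Hstar N.
  assert (Hinit : sim_inv CT Prog (ES G B V) (BS G [] B V)).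
  { left. intro n. exists []. split; [intros a []|]. simpl.
    rewrite mscale_nil, !app_nil_r. apply rt_refl. }
  destruct (sim_inv_star CT Prog Hrr _ _ _ Hstar Hinit) as [Hsim|[Hunsat Hdead]].
  - destruct (Hsim N) as [Z [_ Hs]].
    exists (L ++ mscale (S N) P ++ Z). split; [exact Hs|].
    exists (P ++ Z). rewrite mscale_S. perm_solve.
  - exists (L ++ mscale N P). split.
    + exact (reaches_unsat_star_e CT Prog (ES G B V) _ _ Hdead Hunsat).
    + exists []. rewrite app_nil_r. apply Permutation_refl.
Qed.
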